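(* Let $\mathbf A,\mathbf B\in\mathbb R_+^{m\times n}$, $\mathbf c,\mathbf d\in\mathbb R_+^n$, and $\mathcal U=\{\mathbf h\in\mathbb R^m_+:\mathbf R\mathbf h\le\mathbf r\}$ a compact set with $\mathbf R\in\mathbb R_+^{L\times m}$, $\mathbf r\in\mathbb R_+^L$. Let $\mathcal W=\{\mathbf w\in\mathbb R^m_+:\mathbf B^T\mathbf w\le\mathbf d\}$. Suppose there exist a simplex $\mathcal S\subseteq\mathbb R^m$ and $\kappa\ge1$ such that $\mathcal S\subseteq\mathcal W\subseteq\kappa\cdot\mathcal S$. Then $$z_{\sf d\text{-}AR}(\mathbf B)\le z_{\sf d\text{-}Aff}(\mathbf B)\le\kappa\cdot z_{\sf d\text{-}AR}(\mathbf B),$$ and furthermore $$z_{\sf AR}(\mathbf B)\le z_{\sf Aff}(\mathbf B)\le\kappa\cdot z_{\sf AR}(\mathbf B).$$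
   Context: A simplex in $\mathbb R^m$ is the convex hull of $m+1$ affinely independent points; $\kappa\cdot\mathcal S=\{\kappa\mathbf s:\mathbf s\in\mathcal S\}$. The two-stage adjustable robust problem is $$z_{\sf AR}(\mathbf B)=\min_{\mathbf x\in\mathbb R^n_+}\ \mathbf c^T\mathbf x+\max_{\mathbf h\in\mathcal U}\ \min_{\mathbf y(\mathbf h)\in\mathbb R^n_+:\ \mathbf A\mathbf x+\mathbf B\mathbf y(\mathbf h)\ge \mathbf h}\ \mathbf d^T\mathbf y(\mathbf h),$$ and $z_{\sf Aff}(\mathbf B)$ is the same problem with $\mathbf y(\mathbf h)=\mathbf P\mathbf h+\mathbf q$ restricted to be affine: the minimum over $\mathbf x\in\mathbb R^n_+$, $\mathbf P\in\mathbb R^{n\times m}$, $\mathbf q\in\mathbb R^n$ of $\mathbf c^T\mathbf x+\max_{\mathbf h\in\mathcal U}\mathbf d^T(\mathbf P\mathbf h+\mathbf q)$ subject to $\mathbf A\mathbf x+\mathbf B(\mathbf P\mathbf h+\mathbf q)\ge\mathbf h$ and $\mathbf P\mathbf h+\mathbf q\ge\mathbf 0$ for all $\mathbf h\in\mathcal U$. The dualized adjustable problem is $$z_{\sf d\text{-}AR}(\mathbf B)=\min_{\mathbf x\in\mathbb R^n_+}\ \mathbf c^T\mathbf x+\max_{\mathbf w\in\mathcal W}\ \min_{\boldsymbol\lambda(\mathbf w)\in\mathbb R^L_+:\ \mathbf R^T\boldsymbol\lambda(\mathbf w)\ge\mathbf w}\ \left(-(\mathbf A\mathbf x)^T\mathbf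 w+\mathbf r^T\boldsymbol\lambda(\mathbf w)\right),$$ and $z_{\sf d\text{-}Aff}(\mathbf B)$ is its optimal value when $\boldsymbol\lambda(\mathbf w)$ is restricted to be an affine function of $\mathbf w$ (feasible, i.e. $\boldsymbol\lambda(\mathbf w)\ge\mathbf 0$ and $\mathbf R^T\boldsymbol\lambda(\mathbf w)\ge\mathbf w$, for all $\mathbf w\in\mathcal W$). *)

From HB Require Import structures.
From mathcomp Require Import all_boot all_order all_algebra.
From mathcomp Require Import all_classical all_reals all_analysis.
Set Implicit Arguments. Unset Strict Implicit. Unset Printing Implicit Defensive.
Import Order.TTheory GRing.Theory Num.Theory.
Import numFieldNormedType.Exports.
Local Open Scope classical_set_scope.
Local Open Scope ring_scope.

Definition mxle (R : realType) (p q : nat) (u v : 'M[R]_(p, q)) : Prop :=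
  forall i j, u i j <= v i j.

Definition mxnn (R : realType) (p q : nat) (u : 'M[R]_(p, q)) : Prop :=
  mxle 0 u.

Definition dotv (R : realType) (k : nat) (u v : 'cV[R]_k) : R :=
  (u^T *m v) 0 0.

Definition Uset (R : realType) (m L : nat) (Rm : 'M[R]_(L, m)) (r : 'cV[R]_L)
  : set 'cV[R]_m := [set h | mxnn h /\ mxle (Rm *m h) r].

Definition Wset (R : realType) (m n : nat) (B : 'M[R]_(m, n)) (d : 'cV[R]_n)
  : set 'cV[R]_m := [set w | mxnn w /\ mxle (B^T *m w) d].

Definition z_AR (R : realType) (m n L : nat) (A B : 'M[R]_(m, n))
  (c d : 'cV[R]_n) (Rm : 'M[R]_(L, m)) (r : 'cV[R]_L) : \bar R :=
  ereal_inf [set ((dotv c x)%:E +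
        ereal_sup [set ereal_inf [set (dotv d y)%:E | y in
                     [set y : 'cV[R]_n | mxnn y /\ mxle h (A *m x + B *m y)]]
                  | h in Uset Rm r])%E
      | x in [set x : 'cV[R]_n | mxnn x]].

Definition aff_feasible (R : realType) (m n L : nat) (A B : 'M[R]_(m, n))
  (Rm : 'M[R]_(L, m)) (r : 'cV[R]_L)
  (x : 'cV[R]_n) (P : 'M[R]_(n, m)) (q : 'cV[R]_n) : Prop :=
  mxnn x /\ forall h, Uset Rm r h ->
    mxle h (A *m x + B *m (P *m h + q)) /\ mxnn (P *m h + q).

Definition z_Aff (R : realType) (m n L : nat) (A B : 'M[R]_(m, n))
  (c d : 'cV[R]_n) (Rm : 'M[R]_(L, m)) (r : 'cV[R]_L) : \bar R :=
  ereal_inf [set ((dotv c xPq.1.1)%:E +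
        ereal_sup [set (dotv d (xPq.1.2 *m h + xPq.2))%:E | h in Uset Rm r])%E
      | xPq in [set xPq : 'cV[R]_n * 'M[R]_(n, m) * 'cV[R]_n |
                 aff_feasible A B Rm r xPq.1.1 xPq.1.2 xPq.2]].

Definition z_dAR (R : realType) (m n L : nat) (A B : 'M[R]_(m, n))
  (c d : 'cV[R]_n) (Rm : 'M[R]_(L, m)) (r : 'cV[R]_L) : \bar R :=
  ereal_inf [set ((dotv c x)%:E +
        ereal_sup [set ereal_inf [set (- dotv (A *m x) w + dotv r lam)%:E | lam in
                     [set lam : 'cV[R]_L | mxnn lam /\ mxle w (Rm^T *m lam)]]
                  | w in Wset B d])%E
      | x in [set x : 'cV[R]_n | mxnn x]].

Definition daff_feasible (R : realType) (m n L : nat) (B : 'M[R]_(m, n))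
  (d : 'cV[R]_n) (Rm : 'M[R]_(L, m))
  (x : 'cV[R]_n) (Q : 'M[R]_(L, m)) (p : 'cV[R]_L) : Prop :=
  mxnn x /\ forall w, Wset B d w ->
    mxnn (Q *m w + p) /\ mxle w (Rm^T *m (Q *m w + p)).

Definition z_dAff (R : realType) (m n L : nat) (A B : 'M[R]_(m, n))
  (c d : 'cV[R]_n) (Rm : 'M[R]_(L, m)) (r : 'cV[R]_L) : \bar R :=
  ereal_inf [set ((dotv c xQp.1.1)%:E +
        ereal_sup [set (- dotv (A *m xQp.1.1) w
                        + dotv r (xQp.1.2 *m w + xQp.2))%:E | w in Wset B d])%E
      | xQp in [set xQp : 'cV[R]_n * 'M[R]_(L, m) * 'cV[R]_L |
                 daff_feasible B d Rm xQp.1.1 xQp.1.2 xQp.2]].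

Definition conv_hull (R : realType) (m k : nat) (v : 'I_k -> 'cV[R]_m)
  : set 'cV[R]_m :=
  [set s | exists theta : 'I_k -> R, (forall i, 0 <= theta i) /\
           \sum_i theta i = 1 /\ s = \sum_i theta i *: v i].

Definition aff_indep (R : realType) (m k : nat) (v : 'I_k -> 'cV[R]_m) : Prop :=
  forall a : 'I_k -> R, \sum_i a i = 0 -> \sum_i a i *: v i = 0 ->
    forall i, a i = 0.

Definition is_simplex (R : realType) (m : nat) (S : set 'cV[R]_m) : Prop :=
  exists v : 'I_m.+1 -> 'cV[R]_m, aff_indep v /\ S = conv_hull v.

Definition scale_set (R : realType) (m : nat) (kappa : R) (S : set 'cV[R]_m)
  : set 'cV[R]_m := [set kappa *: s | s in S].

(* Affine policies are particular adjustable policies, which gives the lower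
   bounds. For the upper bound on the dual side, pick nearly optimal multipliers
   [lam_j] at the vertices [v_j] of S, which lie in W; since W is contained in
   kappa S, every [w] in W is [kappa * sum_j th_j v_j] with barycentric
   coordinates [th] affine in [w], and [w |-> kappa * sum_j th_j lam_j] is an
   affine dual policy costing at most kappa times the dual adjustable value.
   LP duality (from Farkas' lemma, by Fourier-Motzkin elimination) then gives
   z_dAR <= z_AR and turns every affine dual policy into an affine primal policy
   of no larger cost, so z_Aff <= z_dAff <= kappa z_dAR <= kappa z_AR. *)

From HB Require Import structures.
From mathcomp Require Import all_boot all_order all_algebra.
From mathcomp Require Import all_classical all_reals all_analysis.
From mathcomp Require Import ring lra.
Set Implicit Arguments. Unset Strict Implicit. Unset Printing Implicit Defensive.
Import Order.TTheory GRing.Theory Num.Theory.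
Import numFieldNormedType.Exports.
Local Open Scope classical_set_scope.
Local Open Scope ring_scope.

Lemma sum_delta_mul (R : pzSemiRingType) (I : finType) (i : I) (F : I -> R) :
  \sum_j (j == i)%:R * F j = F i.
Proof.
by rewrite (bigD1 i) //= eqxx mul1r big1 ?addr0 // => j /negbTE ->; rewrite mul0r.
Qed.

Lemma sum_delta_scale (R : pzRingType) (V : lmodType R) (I : finType) (i : I) (F : I -> V) :
  \sum_j (j == i)%:R *: F j = F i.
Proof.
by rewrite (bigD1 i) //= eqxx scale1r big1 ?addr0 // => j /negbTE ->; rewrite scale0r.
Qed.

Section Between.
Variable R : realDomainType.

Lemma exists_between_seq (ls us : seq R) :
  (forall l u, l \in ls -> u \in us -> l <= u) ->
  exists t, (forall l, l \in ls -> l <= t) /\ (forall u, u \in us -> t <= u).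
Proof.
elim: ls => [|l ls IH] H.
  elim: us {H} => [|u us [t [_ Ht]]]; first by exists 0.
  exists (Num.min t u); split => // v.
  rewrite inE => /orP[/eqP->|/Ht tv]; first by rewrite ge_min lexx orbT.
  by rewrite ge_min tv.
case: IH => [l' u l'in uin|t [Hl Hu]]; first by apply: H => //; rewrite inE l'in orbT.
exists (Num.max t l); split.
  move=> v; rewrite inE => /orP[/eqP->|/Hl tv]; first by rewrite le_max lexx orbT.
  by rewrite le_max tv.
by move=> u uin; rewrite ge_max Hu //=; apply: H => //; rewrite inE eqxx.
Qed.

Lemma exists_between (I : finType) (P Q : pred I) (lo up : I -> R) :
  (forall i j, P i -> Q j -> lo i <= up j) ->
  exists t, (forall i, P i -> lo i <= t) /\ (forall j, Q j -> t <= up j).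
Proof.
move=> H.
have [|t [H1 H2]] := @exists_between_seq [seq lo i | i <- enum I & P i]
                                         [seq up j | j <- enum I & Q j].
  move=> l u /mapP[i]; rewrite mem_filter => /andP[Pi _] -> /mapP[j].
  by rewrite mem_filter => /andP[Qj _] ->; apply: H.
exists t; split.
  by move=> i Pi; apply: H1; apply/mapP; exists i => //; rewrite mem_filter Pi mem_enum.
by move=> j Qj; apply: H2; apply/mapP; exists j => //; rewrite mem_filter Qj mem_enum.
Qed.

End Between.

Section Farkas.
Variable R : realFieldType.

Definition solves k (I : finType) (a : I -> 'I_k -> R) (b : I -> R) (z : 'I_k -> R) :=
  forall i, \sum_l a i l * z l <= b i.

Lemma widen_lift_max k (l : 'I_k) : widen_ord (leqnSn k) l = lift ord_max l.
Proof. by apply: val_inj => /=; rewrite /bump leqNgt ltn_ord. Qed.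

Section FourierMotzkinStep.
Variables (k : nat) (I : finType) (a : I -> 'I_k.+1 -> R) (b : I -> R).
Let al i := a i ord_max.

(* The pair (i, j) yields the combination [-al j * row i + al i * row j] when
   [al i > 0 > al j], the row [i] itself when [al i = 0], and [0 <= 0] otherwise;
   each of these has no coefficient on the last variable. *)
Definition fm_weight (p : I * I) (i' : I) : R :=
  if al p.1 == 0 then (i' == p.1)%:R
  else if (0 < al p.1) && (al p.2 < 0) then
    (i' == p.1)%:R * (- al p.2) + (i' == p.2)%:R * al p.1
  else 0.

Definition fm_coef (p : I * I) (l : 'I_k) : R :=
  \sum_i fm_weight p i * a i (widen_ord (leqnSn k) l).

Definition fm_rhs (p : I * I) : R := \sum_i fm_weight p i * b i.

Lemma fm_weight_ge0 p i : 0 <= fm_weight p i.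
Proof.
rewrite /fm_weight; case: ifP => _; first by case: (_ == _).
case: ifP => // /andP[h1 h2].
by apply: addr_ge0; apply: mulr_ge0; rewrite ?ler0n ?oppr_ge0 ?ltW.
Qed.

Lemma fm_weight_sum p (F : I -> R) : \sum_i fm_weight p i * F i =
  if al p.1 == 0 then F p.1
  else if (0 < al p.1) && (al p.2 < 0) then (- al p.2) * F p.1 + al p.1 * F p.2
  else 0.
Proof.
rewrite /fm_weight; case: ifP => _; first by rewrite sum_delta_mul.
case: ifP => _; last by rewrite big1 // => i _; rewrite mul0r.
under eq_bigr do rewrite mulrDl -!mulrA [_ * F _]mulrC.
by rewrite big_split /= !sum_delta_mul !(mulrC (F _)).
Qed.

Lemma fm_weight_last p : \sum_i fm_weight p i * a i ord_max = 0.
Proof.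
rewrite fm_weight_sum; case: ifP => [/eqP //|_].
by case: ifP => // _; rewrite /al; ring.
Qed.

Lemma fm_solves_lift : (exists z', solves fm_coef fm_rhs z') -> exists z, solves a b z.
Proof.
case=> z' Hz'.
pose S i := b i - \sum_(l < k) a i (widen_ord (leqnSn k) l) * z' l.
have S_comb p : 0 <= \sum_i fm_weight p i * S i.
  have := Hz' p; rewrite /fm_coef /fm_rhs -subr_ge0.
  rewrite (eq_bigr (fun l => \sum_i fm_weight p i * (a i (widen_ord (leqnSn k) l) * z' l)));
    last by move=> l _; rewrite mulr_suml; apply: eq_bigr => i _; rewrite mulrA.
  rewrite exchange_big /= -sumrB; congr (0 <= _); apply: eq_bigr => i _.
  by rewrite /S mulrBr mulr_sumr.
have S_ge0 i : al i = 0 -> 0 <= S i.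
  by move=> h; have := S_comb (i, i); rewrite fm_weight_sum /= h eqxx.
have S_sep i j : 0 < al i -> al j < 0 -> S j / al j <= S i / al i.
  move=> hi hj; have := S_comb (i, j); rewrite fm_weight_sum /= gt_eqF // hi hj /=.
  have -> : - al j * S i + al i * S j = (al i * - al j) * (S i / al i - S j / al j).
    by field; rewrite ?(lt_eqF hj) ?(gt_eqF hi).
  by rewrite pmulr_rge0 ?subr_ge0 // mulr_gt0 // oppr_gt0.
(* The last coordinate must lie in every interval [[S j / al j, S i / al i]] with
   [al j < 0 < al i]; the combinations of rows [(i, j)] say these intervals meet. *)
have [t [Ht1 Ht2]] := @exists_between _ I (fun j => al j < 0) (fun i => 0 < al i)
   (fun j => S j / al j) (fun i => S i / al i) (fun j i hj hi => S_sep i j hi hj).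
exists (fun l => if unlift ord_max l is Some l' then z' l' else t) => i.
rewrite big_ord_recr /= unlift_none.
under eq_bigr do rewrite widen_lift_max liftK -widen_lift_max.
rewrite -lerBrDl -/(S i).
case: (ltgtP (al i) 0) => h.
- by have := Ht1 i h; rewrite ler_ndivrMr // mulrC.
- by have := Ht2 i h; rewrite ler_pdivlMr // mulrC.
- by rewrite /al in h; rewrite h mul0r; apply: S_ge0.
Qed.

End FourierMotzkinStep.

Lemma farkas_ineq k (I : finType) (a : I -> 'I_k -> R) (b : I -> R) :
  ~ (exists z, solves a b z) ->
  exists mu : I -> R, (forall i, 0 <= mu i) /\ (forall l, \sum_i mu i * a i l = 0)
     /\ \sum_i mu i * b i < 0.
Proof.
elim: k I a b => [|k IH] I a b Hn.
  have [/existsP [i hi]|/existsPn H] := boolP [exists i, b i < 0]; last first.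
    by case: Hn; exists (fun _ => 0) => i; rewrite big_ord0 leNgt H.
  exists (fun j => (j == i)%:R); split; first by move=> j; rewrite ler0n.
  by split; [case | rewrite sum_delta_mul].
have [mu' [mu'0 [mu'a mu'b]]] := IH _ _ _ (fun h => Hn (fm_solves_lift h)).
exists (fun i => \sum_p mu' p * fm_weight a p i); split.
  by move=> i; apply: sumr_ge0 => p _; rewrite mulr_ge0 ?fm_weight_ge0.
have comb F : \sum_i (\sum_p mu' p * fm_weight a p i) * F i
            = \sum_p mu' p * \sum_i fm_weight a p i * F i.
  under eq_bigr do rewrite mulr_suml; rewrite exchange_big /=.
  by apply: eq_bigr => p _; rewrite mulr_sumr; apply: eq_bigr => i _; rewrite mulrA.
split; last by rewrite comb.
move=> l; rewrite comb; case: (unliftP ord_max l) => [l'|] ->.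
  by rewrite -[RHS](mu'a l'); apply: eq_bigr => p _; rewrite /fm_coef widen_lift_max.
by rewrite big1 // => p _; rewrite fm_weight_last mulr0.
Qed.

End Farkas.

Section Componentwise.
Variable R : realType.
Implicit Types (p q k : nat).

Lemma mxnnE p q (u : 'M[R]_(p, q)) : mxnn u <-> forall i j, 0 <= u i j.
Proof. by split => H i j; move: (H i j); rewrite mxE. Qed.

Lemma mxleE p q (u v : 'M[R]_(p, q)) : mxle u v <-> mxnn (v - u).
Proof. by split => H i j; move: (H i j); rewrite !mxE ?subr_ge0. Qed.

Lemma mxleD p q (u1 v1 u2 v2 : 'M[R]_(p, q)) :
  mxle u1 v1 -> mxle u2 v2 -> mxle (u1 + u2) (v1 + v2).
Proof. by move=> H1 H2 i j; rewrite !mxE lerD. Qed.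

Lemma mxleZ p q (a : R) (u v : 'M[R]_(p, q)) :
  0 <= a -> mxle u v -> mxle (a *: u) (a *: v).
Proof. by move=> a0 H i j; rewrite !mxE ler_wpM2l. Qed.

Lemma mxle_sum p q (I : finType) (F G : I -> 'M[R]_(p, q)) :
  (forall i, mxle (F i) (G i)) -> mxle (\sum_i F i) (\sum_i G i).
Proof. by move=> H a b; rewrite !summxE; apply: ler_sum => i _; apply: H. Qed.

Lemma mxle_trans p q (u v w : 'M[R]_(p, q)) : mxle u v -> mxle v w -> mxle u w.
Proof. by move=> H1 H2 i j; apply: le_trans (H1 i j) (H2 i j). Qed.

Lemma mxnnZ p q (a : R) (u : 'M[R]_(p, q)) : 0 <= a -> mxnn u -> mxnn (a *: u).
Proof. by move=> a0 u0; have := mxleZ a0 u0; rewrite scaler0. Qed.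

Lemma mxnn_sum p q (I : finType) (F : I -> 'M[R]_(p, q)) :
  (forall i, mxnn (F i)) -> mxnn (\sum_i F i).
Proof.
move=> H a b; rewrite summxE mxE; apply: sumr_ge0 => i _.
by have := H i a b; rewrite mxE.
Qed.

Lemma mxnnD p q (u v : 'M[R]_(p, q)) : mxnn u -> mxnn v -> mxnn (u + v).
Proof. by move=> H1 H2; have := mxleD H1 H2; rewrite addr0. Qed.

Lemma mxnn_mul p q s (M : 'M[R]_(p, q)) (v : 'M[R]_(q, s)) :
  mxnn M -> mxnn v -> mxnn (M *m v).
Proof.
move=> /mxnnE M0 /mxnnE v0; apply/mxnnE => i j; rewrite mxE.
by apply: sumr_ge0 => l _; apply: mulr_ge0.
Qed.

Lemma mxle_mulr p q s (G M : 'M[R]_(p, q)) (v : 'M[R]_(q, s)) :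
  mxnn v -> mxle G M -> mxle (G *m v) (M *m v).
Proof.
move=> /mxnnE v0 H i j; rewrite !mxE; apply: ler_sum => l _; exact: ler_wpM2r.
Qed.

Lemma dotvE k (u v : 'cV[R]_k) : dotv u v = \sum_i u i 0 * v i 0.
Proof. by rewrite /dotv mxE; apply: eq_bigr => i _; rewrite mxE. Qed.

Lemma dotvC k (u v : 'cV[R]_k) : dotv u v = dotv v u.
Proof. by rewrite !dotvE; apply: eq_bigr => i _; rewrite mulrC. Qed.

Lemma dotvDr k (u v w : 'cV[R]_k) : dotv u (v + w) = dotv u v + dotv u w.
Proof. by rewrite /dotv mulmxDr mxE. Qed.

Lemma dotvBr k (u v w : 'cV[R]_k) : dotv u (v - w) = dotv u v - dotv u w.
Proof. by rewrite dotvDr; congr (_ + _); rewrite /dotv mulmxN mxE. Qed.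

Lemma dotvBl k (u v w : 'cV[R]_k) : dotv (u - v) w = dotv u w - dotv v w.
Proof. by rewrite dotvC dotvBr !(dotvC w). Qed.

Lemma dotvZr k a (u v : 'cV[R]_k) : dotv u (a *: v) = a * dotv u v.
Proof. by rewrite /dotv -scalemxAr mxE. Qed.

Lemma dotv0r k (u : 'cV[R]_k) : dotv u 0 = 0.
Proof. by rewrite /dotv mulmx0 mxE. Qed.

Lemma dotv_sumr k (I : finType) (u : 'cV[R]_k) (F : I -> 'cV[R]_k) :
  dotv u (\sum_i F i) = \sum_i dotv u (F i).
Proof. by rewrite /dotv mulmx_sumr summxE. Qed.

Lemma dotv_mulmx k p (u : 'cV[R]_k) (M : 'M[R]_(k, p)) (v : 'cV[R]_p) :
  dotv u (M *m v) = dotv (M^T *m u) v.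
Proof. by rewrite /dotv trmx_mul trmxK mulmxA. Qed.

Lemma dotv_ge0 k (u v : 'cV[R]_k) : mxnn u -> mxnn v -> 0 <= dotv u v.
Proof.
move=> /mxnnE u0 /mxnnE v0; rewrite dotvE.
by apply: sumr_ge0 => i _; apply: mulr_ge0.
Qed.

Lemma ler_dotvr k (z u v : 'cV[R]_k) : mxnn z -> mxle u v -> dotv z u <= dotv z v.
Proof.
move=> /mxnnE z0 H; rewrite !dotvE; apply: ler_sum => i _; exact: ler_wpM2l.
Qed.

Lemma ler_dotvl k (z u v : 'cV[R]_k) : mxnn z -> mxle u v -> dotv u z <= dotv v z.
Proof. by move=> z0 H; rewrite !(dotvC _ z); apply: ler_dotvr. Qed.

End Componentwise.

Section LPDuality.
Variables (R : realType) (m n : nat) (M : 'M[R]_(m, n)) (e : 'cV[R]_n).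
Hypothesis e0 : mxnn e.

Lemma lp_bound_homogeneous (f : 'cV[R]_m) (bb t : R) (u : 'cV[R]_m) :
  (forall u, mxnn u -> mxle (M^T *m u) e -> dotv f u <= bb) ->
  mxnn u -> 0 <= t -> mxle (M^T *m u) (t *: e) -> dotv f u <= t * bb.
Proof.
move=> Hyp u0; rewrite le_eqVlt => /predU1P[<-|t_gt0] Mu; last first.
  have := Hyp (t^-1 *: u); rewrite dotvZr ler_pdivrMl //; apply.
    by apply: mxnnZ; rewrite // invr_ge0 ltW.
  by rewrite -scalemxAr -[e](scalerK (lt0r_neq0 t_gt0)); apply: mxleZ; rewrite ?invr_ge0 ?ltW.
(* For [t = 0] every multiple of [u] is feasible, so [f.u > 0] is impossible. *)
rewrite mul0r leNgt; apply/negP => fu_gt0.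
pose s := (`|bb| + 1) / dotv f u.
have s0 : 0 <= s by rewrite divr_ge0 ?ltW // addr_ge0.
have Msu : mxle (M^T *m (s *: u)) e.
  apply: mxle_trans e0; rewrite -scalemxAr -(scaler0 _ s).
  by apply: mxleZ; rewrite // -(scale0r e).
have := Hyp _ (mxnnZ s0 u0) Msu.
by rewrite dotvZr /s mulfVK ?gt_eqF //; have := ler_norm bb; lra.
Qed.

Lemma lp_duality (f : 'cV[R]_m) (bb : R) :
  (forall u, mxnn u -> mxle (M^T *m u) e -> dotv f u <= bb) ->
  exists y, [/\ mxnn y, mxle f (M *m y) & dotv e y <= bb].
Proof.
move=> Hyp.
(* The system [-y <= 0, -M y <= -f, e.y <= bb] in the unknown [y]. *)
pose I := ('I_n + 'I_m + 'I_1)%type.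
pose a : I -> 'I_n -> R := fun i l => match i with
  | inl (inl k) => - (l == k)%:R | inl (inr j) => - M j l | inr _ => e l 0 end.
pose b : I -> R := fun i => match i with
  | inl (inl _) => 0 | inl (inr j) => - f j 0 | inr _ => bb end.
have [[z Hz]|Hn] := pselect (exists z, solves a b z).
  exists (\col_l z l); split.
  - move=> i j; rewrite !mxE; have := Hz (inl (inl i)); rewrite /a /b /=.
    by under eq_bigr do rewrite mulNr; rewrite sumrN sum_delta_mul oppr_le0.
  - move=> i j; rewrite (ord1 j) !mxE; under eq_bigr do rewrite mxE.
    have := Hz (inl (inr i)); rewrite /a /b /=.
    by under eq_bigr do rewrite mulNr; rewrite sumrN lerN2.
  - by rewrite dotvE; under eq_bigr do rewrite mxE; apply: (Hz (inr ord0)).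
have [mu [mu0 [mu_a mu_b]]] := farkas_ineq Hn.
pose u : 'cV_m := \col_j mu (inl (inr j)).
pose t := mu (inr ord0).
have u0 : mxnn u by apply/mxnnE => i j; rewrite mxE.
have Mu : mxle (M^T *m u) (t *: e).
  move=> l j; rewrite (ord1 j) [X in X <= _]mxE [X in _ <= X]mxE.
  under eq_bigr do rewrite !mxE mulrC.
  have := mu_a l; rewrite !big_sumType big_ord1 /=.
  under eq_bigr do rewrite mulrN eq_sym mulrC; rewrite sumrN sum_delta_mul.
  under eq_bigr do rewrite mulrN; rewrite sumrN.
  have := mu0 (inl (inl l)); rewrite /t; lra.
have fu : dotv f u = \sum_j mu (inl (inr j)) * f j 0.
  by rewrite dotvE; apply: eq_bigr => j _; rewrite mxE mulrC.
have := lp_bound_homogeneous Hyp u0 (mu0 _) Mu; rewrite fu.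
move: mu_b; rewrite !big_sumType big_ord1 /= big1 ?add0r; last by move=> k _; rewrite mulr0.
under eq_bigr do rewrite mulrN; rewrite sumrN /t; lra.
Qed.

Lemma lp_duality_mx k (G : 'M[R]_(k, m)) (g : 'cV[R]_k) :
  (forall u, mxnn u -> mxle (M^T *m u) e -> mxle (G *m u) g) ->
  exists Y : 'M[R]_(n, k), [/\ mxnn Y, mxle G^T (M *m Y) & mxle (Y^T *m e) g].
Proof.
move=> Hyp.
have [y Hy] : {y : 'I_k -> 'cV[R]_n & forall l,
    [/\ mxnn (y l), mxle (row l G)^T (M *m y l) & dotv e (y l) <= g l 0]}.
  apply: (@choice _ _ (fun l y => [/\ mxnn y, mxle (row l G)^T (M *m y) & dotv e y <= g l 0])) => l.
  apply: lp_duality => u u0 Mu.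
  by have := Hyp u u0 Mu l 0; rewrite /dotv trmxK -row_mul !mxE.
exists (\matrix_(i, l) y l i 0); split => [i l|i l|l j].
- by rewrite !mxE; have [/mxnnE + _ _] := Hy l; apply.
- have [_ /(_ i 0) + _] := Hy l; rewrite !mxE.
  by under [X in _ -> _ <= X]eq_bigr do rewrite mxE.
- have [_ _] := Hy l; rewrite (ord1 j) dotvE !mxE.
  by under [X in _ -> X <= _]eq_bigr do rewrite !mxE mulrC.
Qed.

End LPDuality.

Lemma mulmx_columns (R : comPzRingType) L k (lam : 'I_k -> 'cV[R]_L) (th : 'I_k -> R) :
  (\matrix_(l, j) lam j l 0) *m (\col_j th j) = \sum_j th j *: lam j.
Proof.
apply/matrixP => l i; rewrite (ord1 i) !mxE summxE; apply: eq_bigr => j _.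
by rewrite !mxE mulrC.
Qed.

Section AffineInterpolation.
Variables (R : realType) (m : nat) (v : 'I_m.+1 -> 'cV[R]_m).
Hypothesis hv : aff_indep v.

(* Column [j] is [(1, v j)]: affine independence of [v] is invertibility. *)
Definition vertex_mx : 'M[R]_m.+1 :=
  col_mx (const_mx 1 : 'M[R]_(1, m.+1)) (\matrix_(i, j) v j i 0).

Lemma vertex_mx_mul (th : 'I_m.+1 -> R) :
  (vertex_mx *m \col_j th j : 'cV_(1 + m))
  = col_mx (const_mx (\sum_j th j) : 'cV_1) (\sum_j th j *: v j).
Proof.
rewrite /vertex_mx (@mul_col_mx _ 1 m); congr col_mx; apply/matrixP => i k.
  by rewrite !mxE; apply: eq_bigr => j _; rewrite !mxE mul1r.
by rewrite !mxE summxE (ord1 k); apply: eq_bigr => j _; rewrite !mxE mulrC.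
Qed.

Lemma vertex_mx_unit : vertex_mx \in unitmx.
Proof.
rewrite -unitmx_tr -row_free_unit -kermx_eq0; apply/eqP/row_matrixP => i.
rewrite row0; set u := row i _.
have u_ker : vertex_mx *m u^T = 0.
  by rewrite -[vertex_mx]trmxK -trmx_mul /u -row_mul mulmx_ker row0 trmx0.
have uT : u^T = \col_j u 0 j by apply/colP => j; rewrite !mxE.
have : col_mx (const_mx (\sum_j u 0 j) : 'cV_1) (\sum_j u 0 j *: v j) = col_mx 0 0.
  by rewrite col_mx0 -vertex_mx_mul -uT.
move=> /eq_col_mx[/matrixP/(_ 0 0) + sv0]; rewrite !mxE => s0.
by apply/rowP => j; rewrite [RHS]mxE; exact: hv s0 sv0 j.
Qed.

Lemma affine_interpolation L (lam : 'I_m.+1 -> 'cV[R]_L) :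
  exists Q p, forall th : 'I_m.+1 -> R, \sum_j th j = 1 ->
    Q *m (\sum_j th j *: v j) + p = \sum_j th j *: lam j.
Proof.
pose K := (\matrix_(l, j) lam j l 0) *m invmx vertex_mx.
exists (K *m col_mx (0 : 'M[R]_(1, m)) 1%:M), (K *m col_mx (const_mx 1 : 'cV[R]_1) 0).
move=> th th1; have -> : \sum_j th j *: lam j = K *m (vertex_mx *m \col_j th j).
  by rewrite mulmxA mulmxKV ?vertex_mx_unit // mulmx_columns.
rewrite vertex_mx_mul th1 -mulmxA -mulmxDr.
by rewrite (@mul_col_mx _ 1 m) mul0mx mul1mx (@add_col_mx _ 1 m) addr0 add0r.
Qed.

End AffineInterpolation.

Lemma le_ereal_inf_image (R : realType) (T1 T2 : Type) (X1 : set T1) (X2 : set T2)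
  (F1 : T1 -> \bar R) (F2 : T2 -> \bar R) :
  (forall x2, X2 x2 -> exists2 x1, X1 x1 & (F1 x1 <= F2 x2)%E) ->
  (ereal_inf [set F1 x | x in X1] <= ereal_inf [set F2 x | x in X2])%E.
Proof.
move=> H; apply: le_ereal_inf_tmp => _ [x2 X2x <-].
by have [x1 X1x le] := H x2 X2x; apply: ge_ereal_inf; exists (F1 x1) => //; exists x1.
Qed.

Section TwoStage.
Variables (R : realType) (m n L : nat) (A B : 'M[R]_(m, n))
  (c d : 'cV[R]_n) (Rm : 'M[R]_(L, m)) (r : 'cV[R]_L).
Hypotheses (d0 : mxnn d) (r0 : mxnn r).

Definition recourse (x : 'cV[R]_n) (h : 'cV[R]_m) : \bar R := ereal_inf [set (dotv d y)%:E | y in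
  [set y : 'cV[R]_n | mxnn y /\ mxle h (A *m x + B *m y)]].

Definition worst_recourse (x : 'cV[R]_n) : \bar R := ereal_sup [set recourse x h | h in Uset Rm r].

Definition dual_recourse (x : 'cV[R]_n) (w : 'cV[R]_m) : \bar R := ereal_inf [set (- dotv (A *m x) w + dotv r lam)%:E
  | lam in [set lam : 'cV[R]_L | mxnn lam /\ mxle w (Rm^T *m lam)]].

Definition dual_worst (x : 'cV[R]_n) : \bar R := ereal_sup [set dual_recourse x w | w in Wset B d].

Definition dual_affine_worst (x : 'cV[R]_n) (Q : 'M[R]_(L, m)) (p : 'cV[R]_L) : \bar R :=
  ereal_sup [set (- dotv (A *m x) w + dotv r (Q *m w + p))%:E | w in Wset B d].

Lemma Wset0 : Wset B d 0.
Proof. by split; [move=> i j | rewrite mulmx0]. Qed.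

Lemma Uset0 : Uset Rm r 0.
Proof. by split; [move=> i j | rewrite mulmx0]. Qed.

Lemma worst_recourse_ge0 x : (0 <= worst_recourse x)%E.
Proof.
apply: le_ereal_sup_tmp; exists (recourse x 0); first by exists 0 => //; exact: Uset0.
by apply: le_ereal_inf_tmp => _ [y [y0 _] <-]; rewrite lee_fin dotv_ge0.
Qed.

Lemma dual_worst_ge0 x : (0 <= dual_worst x)%E.
Proof.
apply: le_ereal_sup_tmp; exists (dual_recourse x 0); first by exists 0 => //; exact: Wset0.
apply: le_ereal_inf_tmp => _ [lam [lam0 _] <-].
by rewrite dotv0r oppr0 add0r lee_fin dotv_ge0.
Qed.

Lemma z_dAR_le_z_dAff : (z_dAR A B c d Rm r <= z_dAff A B c d Rm r)%E.
Proof.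
apply: le_ereal_inf_image => -[[x Q] p] [x0 feas] /=.
exists x => //; apply: leeD2l; apply: ge_ereal_sup => _ [w Ww <-].
apply: ge_ereal_inf; exists (- dotv (A *m x) w + dotv r (Q *m w + p))%:E.
  by exists (Q *m w + p) => //; apply: feas.
by apply: ereal_sup_ubound; exists w.
Qed.

Lemma z_AR_le_z_Aff : (z_AR A B c d Rm r <= z_Aff A B c d Rm r)%E.
Proof.
apply: le_ereal_inf_image => -[[x P] q] [x0 feas] /=.
exists x => //; apply: leeD2l; apply: ge_ereal_sup => _ [h Uh <-].
apply: ge_ereal_inf; exists (dotv d (P *m h + q))%:E.
  by exists (P *m h + q) => //; have [? ?] := feas h Uh; split.
by apply: ereal_sup_ubound; exists h.
Qed.

Lemma recourse_ge_dual x h w : Wset B d w ->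
  ((dotv w h - dotv (A *m x) w)%:E <= recourse x h)%E.
Proof.
move=> [w0 Bw]; apply: le_ereal_inf_tmp => _ [y [y0 hy] <-]; rewrite lee_fin.
have := ler_dotvr w0 hy; have := ler_dotvl y0 Bw.
by rewrite -dotv_mulmx dotvDr (dotvC (A *m x)); lra.
Qed.

Lemma dual_worst_le_worst_recourse x : (dual_worst x <= worst_recourse x)%E.
Proof.
have := worst_recourse_ge0 x.
case E: (worst_recourse x) => [s| |] // s0; last by rewrite leey.
apply: ge_ereal_sup => _ [w Ww <-].
have [lam [lam0 lam_w lam_r]] : exists lam, [/\ mxnn lam, mxle w (Rm^T *m lam)
    & dotv r lam <= s + dotv (A *m x) w].
  apply: (lp_duality r0) => h h0; rewrite trmxK => hr.
  have : (recourse x h <= s%:E)%E by rewrite -E; apply: ereal_sup_ubound; exists h.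
  by move/(le_trans (recourse_ge_dual x h Ww)); rewrite lee_fin; lra.
apply: ge_ereal_inf; exists (- dotv (A *m x) w + dotv r lam)%:E; first by exists lam.
by rewrite lee_fin; lra.
Qed.

Lemma z_dAR_le_z_AR : (z_dAR A B c d Rm r <= z_AR A B c d Rm r)%E.
Proof.
apply: le_ereal_inf_image => x x0; exists x => //.
by apply: leeD2l; apply: dual_worst_le_worst_recourse.
Qed.

(* The policy is [h |-> y0 + T h + S (r - Rm h)]; on U both [h] and the slack
   [r - Rm h] are nonnegative. *)
Lemma affine_policy_of_certificates x Q p t y0 (S : 'M[R]_(n, L)) (T : 'M[R]_(n, m)) :
  mxnn x -> mxnn y0 -> mxnn S -> mxnn T ->
  mxle (Q^T *m r - A *m x) (B *m y0) -> mxle (- Q)^T (B *m S) ->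
  mxle (1%:M - Rm^T *m Q)^T (B *m T) ->
  dotv d y0 <= t - dotv r p -> mxle (S^T *m d) p -> mxle (T^T *m d) (Rm^T *m p) ->
  aff_feasible A B Rm r x (T - S *m Rm) (y0 + S *m r) /\
  forall h, Uset Rm r h -> dotv d ((T - S *m Rm) *m h + (y0 + S *m r)) <= t.
Proof.
move=> x0 y0_ge0 S0 T0 By0 BS BT dy0 dS dT.
have policyE h : (T - S *m Rm) *m h + (y0 + S *m r) = y0 + T *m h + S *m (r - Rm *m h).
  by rewrite mulmxBl mulmxBr -mulmxA; apply/matrixP => i j; rewrite !mxE; ring.
have slack h : Uset Rm r h -> mxnn (r - Rm *m h) by move=> [_ /mxleE].
split.
  split => // h [h0 hr]; have rh := slack h (conj h0 hr); rewrite policyE; split.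
    have F1 := mxle_mulr h0 BT; have F2 := mxle_mulr rh BS.
    rewrite linearB /= trmx1 trmx_mul trmxK mulmxBl mul1mx -mulmxA in F1.
    rewrite linearN /= mulNmx mulmxBr -mulmxA in F2.
    move=> i j; move: (By0 i j) (F1 i j) (F2 i j).
    by rewrite !mulmxDr -!mulmxA !mxE; lra.
  by apply: mxnnD; [apply: mxnnD => //|]; apply: mxnn_mul.
move=> h Uh; have rh := slack h Uh; have [h0 _] := Uh.
have cost_T : dotv d (T *m h) <= dotv p (Rm *m h).
  by rewrite !dotv_mulmx; apply: ler_dotvl.
have cost_S : dotv d (S *m (r - Rm *m h)) <= dotv p (r - Rm *m h).
  by rewrite dotv_mulmx; apply: ler_dotvl.
by rewrite dotvBr (dotvC p r) in cost_S; rewrite policyE !dotvDr; lra.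
Qed.

Lemma z_Aff_le_dual_affine_cost x Q p : daff_feasible B d Rm x Q p ->
  (z_Aff A B c d Rm r <= (dotv c x)%:E + dual_affine_worst x Q p)%E.
Proof.
move=> [x0 feas].
have : ((dotv r p)%:E <= dual_affine_worst x Q p)%E.
  apply: le_ereal_sup_tmp; exists (- dotv (A *m x) 0 + dotv r (Q *m 0 + p))%:E.
    by exists 0 => //; exact: Wset0.
  by rewrite mulmx0 add0r dotv0r oppr0 add0r.
case E: (dual_affine_worst x Q p) => [t| |] // _; last by rewrite addey // leey.
have cost w : Wset B d w -> - dotv (A *m x) w + dotv r (Q *m w + p) <= t.
  by move=> Ww; rewrite -lee_fin -E; apply: ereal_sup_ubound; exists w.
have [y0 [y0_ge0 By0 dy0]] : exists y0, [/\ mxnn y0,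
    mxle (Q^T *m r - A *m x) (B *m y0) & dotv d y0 <= t - dotv r p].
  apply: (lp_duality d0) => w w0 Bw; have := cost w (conj w0 Bw).
  by rewrite dotvDr dotv_mulmx dotvBl; lra.
have [S [S0 BS dS]] : exists S : 'M[R]_(n, L),
    [/\ mxnn S, mxle (- Q)^T (B *m S) & mxle (S^T *m d) p].
  apply: (lp_duality_mx d0) => w w0 Bw; apply/mxleE.
  by rewrite mulNmx opprK addrC; have [] := feas w (conj w0 Bw).
have [T [T0 BT dT]] : exists T : 'M[R]_(n, m),
    [/\ mxnn T, mxle (1%:M - Rm^T *m Q)^T (B *m T) & mxle (T^T *m d) (Rm^T *m p)].
  apply: (lp_duality_mx d0) => w w0 Bw; apply/mxleE.
  have [_ /mxleE] := feas w (conj w0 Bw); congr mxnn.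
  rewrite mulmxBl mul1mx mulmxDr mulmxA.
  by apply/matrixP => i j; rewrite !mxE; ring.
have [policy_ok policy_cost] :=
  affine_policy_of_certificates x0 y0_ge0 S0 T0 By0 BS BT dy0 dS dT.
apply: ge_ereal_inf; exists ((dotv c x)%:E + ereal_sup [set (dotv d
    ((T - S *m Rm) *m h + (y0 + S *m r)))%:E | h in Uset Rm r])%E.
  by exists (x, T - S *m Rm, y0 + S *m r).
by apply: leeD2l; apply: ge_ereal_sup => _ [h Uh <-]; rewrite lee_fin policy_cost.
Qed.

Lemma z_Aff_le_z_dAff : (z_Aff A B c d Rm r <= z_dAff A B c d Rm r)%E.
Proof.
apply: le_ereal_inf_tmp => _ [[[x Q] p] feas <-].
exact: z_Aff_le_dual_affine_cost.
Qed.

End TwoStage.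

Lemma conv_hull_vertex (R : realType) m k (v : 'I_k -> 'cV[R]_m) j : conv_hull v (v j).
Proof.
exists (fun i => (i == j)%:R); split; first by move=> i; rewrite ler0n.
split; last by rewrite sum_delta_scale.
by have := sum_delta_mul j (fun _ => 1 : R); under eq_bigr do rewrite mulr1.
Qed.

Section SimplexSandwich.
Variables (R : realType) (m n L : nat) (A B : 'M[R]_(m, n))
  (c d : 'cV[R]_n) (Rm : 'M[R]_(L, m)) (r : 'cV[R]_L).
Variables (v : 'I_m.+1 -> 'cV[R]_m) (kappa : R).
Hypotheses (hv : aff_indep v) (kappa_ge1 : 1 <= kappa).
Hypothesis W_sub : Wset B d `<=` scale_set kappa (conv_hull v).

Let kappa_gt0 : 0 < kappa. Proof. exact: lt_le_trans ltr01 kappa_ge1. Qed.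

(* Interpolate the vertex multipliers [lam j] affinely in [w / kappa]: for
   [w = kappa * sum_j th_j v_j] the policy is [kappa * sum_j th_j lam_j]. *)
Lemma dual_affine_policy_of_vertices x (lam : 'I_m.+1 -> 'cV[R]_L) s :
  mxnn x -> (forall j, [/\ mxnn (lam j), mxle (v j) (Rm^T *m lam j)
                            & - dotv (A *m x) (v j) + dotv r (lam j) <= s]) ->
  exists Q p, daff_feasible B d Rm x Q p /\
    forall w, Wset B d w -> - dotv (A *m x) w + dotv r (Q *m w + p) <= kappa * s.
Proof.
move=> x0 lam_ok.
have [Q [p interp]] := affine_interpolation hv lam.
have Wrep w : Wset B d w -> exists th : 'I_m.+1 -> R,
    [/\ forall j, 0 <= th j, \sum_j th j = 1, w = kappa *: \sum_j th j *: v j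
       & Q *m w + kappa *: p = kappa *: \sum_j th j *: lam j].
  move=> /W_sub [_ [th [th0 [th1 ->]]] <-]; exists th; split => //.
  by rewrite -scalemxAr -scalerDr interp.
exists Q, (kappa *: p); split.
  split => // w /Wrep [th [th0 _ -> ->]]; split.
    apply: mxnnZ; first exact: ltW.
    by apply: mxnn_sum => j; apply: mxnnZ => //; case: (lam_ok j).
  rewrite -scalemxAr mulmx_sumr; apply: mxleZ; first exact: ltW.
  apply: mxle_sum => j; rewrite -scalemxAr; apply: mxleZ => //; by case: (lam_ok j).
move=> w /Wrep [th [th0 th1 -> ->]].
rewrite !dotvZr !dotv_sumr -mulrN -mulrDr ler_pM2l //.
rewrite -sumrN -big_split /= -[s]mul1r -th1 mulr_suml; apply: ler_sum => j _.
by rewrite !dotvZr -mulrN -mulrDr; apply: ler_wpM2l => //; case: (lam_ok j).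
Qed.

Hypotheses (hull_sub : conv_hull v `<=` Wset B d) (c0 : mxnn c) (d0 : mxnn d) (r0 : mxnn r).

Lemma z_dAff_le_kappa_cost x : mxnn x ->
  (z_dAff A B c d Rm r <= kappa%:E * ((dotv c x)%:E + dual_worst A B d Rm r x))%E.
Proof.
move=> x0; have := dual_worst_ge0 A B Rm d0 r0 x.
case E: (dual_worst A B d Rm r x) => [s| |] // s0; last first.
  by rewrite addey // gt0_muley ?leey // lte_fin.
apply/lee_addgt0Pr => e e0.
have [lam lam_ok] : {lam : 'I_m.+1 -> 'cV[R]_L & forall j, [/\ mxnn (lam j),
    mxle (v j) (Rm^T *m lam j) & - dotv (A *m x) (v j) + dotv r (lam j) <= s + e / kappa]}.
  apply: (@choice _ _ (fun j l => [/\ mxnn l, mxle (v j) (Rm^T *m l)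
    & - dotv (A *m x) (v j) + dotv r l <= s + e / kappa])) => j.
  have : (dual_recourse A Rm r x (v j) < (s + e / kappa)%:E)%E.
    have vW : Wset B d (v j) by apply: hull_sub; apply: conv_hull_vertex.
    have : (dual_recourse A Rm r x (v j) <= dual_worst A B d Rm r x)%E.
      by apply: ereal_sup_ubound; exists (v j).
    by rewrite E => /le_lt_trans; apply; rewrite lte_fin ltrDl divr_gt0.
  by case/ereal_inf_lt => _ [l [l0 l1] <-]; rewrite lte_fin => /ltW l2; exists l.
have [Q [p [feas cost]]] := dual_affine_policy_of_vertices x0 lam_ok.
apply: (@le_trans _ _ ((dotv c x + kappa * (s + e / kappa))%:E)).
  apply: ge_ereal_inf; exists ((dotv c x)%:E + dual_affine_worst A B d r x Q p)%E.
    by exists (x, Q, p).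
  rewrite EFinD; apply: leeD2l; apply: ge_ereal_sup => _ [w Ww <-].
  by rewrite lee_fin cost.
rewrite -EFinD lee_fin mulrDr [kappa * (e / kappa)]mulrC divfK ?gt_eqF //.
have : 0 <= (kappa - 1) * dotv c x by rewrite mulr_ge0 ?subr_ge0 ?dotv_ge0.
lra.
Qed.

End SimplexSandwich.

Lemma z_dAff_le_kappa_z_dAR (R : realType) (m n L : nat) (A B : 'M[R]_(m, n))
  (c d : 'cV[R]_n) (Rm : 'M[R]_(L, m)) (r : 'cV[R]_L) (S : set 'cV[R]_m) (kappa : R) :
  mxnn c -> mxnn d -> mxnn r -> is_simplex S -> 1 <= kappa ->
  S `<=` Wset B d -> Wset B d `<=` scale_set kappa S ->
  (z_dAff A B c d Rm r <= kappa%:E * z_dAR A B c d Rm r)%E.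
Proof.
move=> c0 d0 r0 [v [hv ->]] kappa_ge1 hull_sub W_sub.
rewrite -ereal_inf_pZl ?(lt_le_trans ltr01 kappa_ge1) // image_comp.
by apply: le_ereal_inf_tmp => _ [x x0 <-] /=; apply: (z_dAff_le_kappa_cost _ _ hv).
Qed.

Theorem lemma4 (R : realType) (m n L : nat) (A B : 'M[R]_(m, n))
  (c d : 'cV[R]_n) (Rm : 'M[R]_(L, m)) (r : 'cV[R]_L) :
  mxnn A -> mxnn B -> mxnn c -> mxnn d -> mxnn Rm -> mxnn r ->
  compact (Uset Rm r) ->
  forall (S : set 'cV[R]_m) (kappa : R),
    is_simplex S -> 1 <= kappa ->
    S `<=` Wset B d -> Wset B d `<=` scale_set kappa S ->
  ((z_dAR A B c d Rm r <= z_dAff A B c d Rm r)%E /\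
   (z_dAff A B c d Rm r <= kappa%:E * z_dAR A B c d Rm r)%E) /\
  ((z_AR A B c d Rm r <= z_Aff A B c d Rm r)%E /\
   (z_Aff A B c d Rm r <= kappa%:E * z_AR A B c d Rm r)%E).
Proof.
move=> _ _ c0 d0 _ r0 _ S kappa hS kappa_ge1 SW WS.
have dAff_le : (z_dAff A B c d Rm r <= kappa%:E * z_dAR A B c d Rm r)%E.
  exact: z_dAff_le_kappa_z_dAR hS kappa_ge1 SW WS.
split; split => //; first exact: z_dAR_le_z_dAff.
  exact: z_AR_le_z_Aff.
apply: le_trans (z_Aff_le_z_dAff _ _ _ _ _ d0) (le_trans dAff_le _).
by apply: lee_wpmul2l; [rewrite lee_fin (le_trans ler01 kappa_ge1) | exact: z_dAR_le_z_AR].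
Qed.
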